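(* Let $r\ge 2$ be an even integer, $T>0$, and let $u$ be a smooth function on $[a,b]\times[0,T]$ with $u(a,t)=u(b,t)=0$. Let $S[u]=\int_0^T\int_a^b \frac1r|u_x|^r\,dx\,dt$. For smooth $w(x,t)$ with $w(x,0)=w(x,T)=0$, consider the constrained variation $\delta u=w_t-wu_x+uw_x$, and the first variation $\delta S=\int_0^T\int_a^b |u_x|^{r-2}u_x\,(\delta u)_x\,dx\,dt$. Then $$\delta S=\int_0^T\int_a^b\Big(\big(|u_x|^{r-2}u_x\big)_{xt}+\big(|u_x|^{r-2}u_x\big)_xu_x+\Big(\big(|u_x|^{r-2}u_x\big)_xu\Big)_x\Big)w\,dx\,dt,$$ so that $\delta S=0$ for all such $w$ if and only if $u$ satisfies the $r$-Hunter-Saxton equation $$\big(|u_x|^{r-2}u_x\big)_{xt}+\big(|u_x|^{r-2}u_x\big)_xu_x+\Big(\big(|u_x|^{r-2}u_x\big)_xu\Big)_x=0.$$ That is, the $r$-Hunter-Saxton equation is the Euler-Poincaré equation for the Lagrangian $l[u]=\int_a^b\frac1r|u_x|^r\,dx$.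
   Context: The constrained variations $\delta u=w_t-wu_x+uw_x$ are those induced on the Eulerian velocity $u$ by variations of a time-dependent family of diffeomorphisms $g$ of $[a,b]$ with $g_t(x,t)=u(g(x,t),t)$; the Euler-Poincaré equation is the stationarity condition of the action under such variations. *)

From Stdlib Require Import Reals Lra.
From Coquelicot Require Import Coquelicot.
Open Scope R_scope.

Definition dx (f : R -> R -> R) : R -> R -> R :=
  fun x t => Derive (fun y => f y t) x.
Definition dt (f : R -> R -> R) : R -> R -> R :=
  fun x t => Derive (fun s => f x s) t.

Definition cont2 (f : R -> R -> R) : Prop :=
  forall p : R * R, continuous (fun q : R * R => f (fst q) (snd q)) p.

Fixpoint Cn (n : nat) (f : R -> R -> R) : Prop :=
  match n with
  | O => cont2 f
  | S k => cont2 f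
           /\ (forall x t, ex_derive (fun y => f y t) x)
           /\ (forall x t, ex_derive (fun s => f x s) t)
           /\ Cn k (dx f) /\ Cn k (dt f)
  end.

Definition smooth (f : R -> R -> R) : Prop := forall n, Cn n f.

Definition mom (r : nat) (u : R -> R -> R) : R -> R -> R :=
  fun x t => Rabs (dx u x t) ^ (r - 2) * dx u x t.

Definition delta_u (u w : R -> R -> R) : R -> R -> R :=
  fun x t => dt w x t - w x t * dx u x t + u x t * dx w x t.

Definition deltaS (r : nat) (a b T : R) (u w : R -> R -> R) : R :=
  RInt (fun t => RInt (fun x => mom r u x t * dx (delta_u u w) x t) a b) 0 T.

Definition rHS (r : nat) (u : R -> R -> R) : R -> R -> R :=
  fun x t => dt (dx (mom r u)) x t + dx (mom r u) x t * dx u x t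
             + dx (fun y s => dx (mom r u) y s * u y s) x t.

Definition admissible (a b T : R) (w : R -> R -> R) : Prop :=
  smooth w
  /\ (forall x, a <= x <= b -> w x 0 = 0 /\ w x T = 0)
  /\ (forall t, 0 <= t <= T -> w a t = 0 /\ w b t = 0).

(* Since r is even, m = |u_x|^(r-2) u_x = u_x^(r-1) is smooth. Pointwise,
     m (du)_x = E(m,u) w + (m du - m_x u w)_x - (m_x w)_t,
   where E(m,u) = m_xt + m_x u_x + (m_x u)_x is exactly the r-Hunter-Saxton
   operator. The x-flux vanishes at x = a, b (there u, w and w_t vanish) and
   the t-flux at t = 0, T, so integrating over the rectangle gives the formula
   for dS. Conversely, testing dS = 0 against w = E (x-a)(b-x) t(T-t) forces
   E = 0 inside the rectangle, hence on its closure by continuity. *)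

From Stdlib Require Import Reals Lra Lia FunctionalExtensionality.
From Coquelicot Require Import Coquelicot.
Open Scope R_scope.

Lemma dx_plus f g x t :
  ex_derive (fun y => f y t) x -> ex_derive (fun y => g y t) x ->
  dx (fun x t => f x t + g x t) x t = dx f x t + dx g x t.
Proof. exact (Derive_plus (fun y => f y t) (fun y => g y t) x). Qed.

Lemma dt_plus f g x t :
  ex_derive (fun s => f x s) t -> ex_derive (fun s => g x s) t ->
  dt (fun x t => f x t + g x t) x t = dt f x t + dt g x t.
Proof. exact (Derive_plus (fun s => f x s) (fun s => g x s) t). Qed.

Lemma dx_mult f g x t :
  ex_derive (fun y => f y t) x -> ex_derive (fun y => g y t) x ->
  dx (fun x t => f x t * g x t) x t = dx f x t * g x t + f x t * dx g x t.
Proof. exact (Derive_mult (fun y => f y t) (fun y => g y t) x). Qed.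

Lemma dt_mult f g x t :
  ex_derive (fun s => f x s) t -> ex_derive (fun s => g x s) t ->
  dt (fun x t => f x t * g x t) x t = dt f x t * g x t + f x t * dt g x t.
Proof. exact (Derive_mult (fun s => f x s) (fun s => g x s) t). Qed.

Lemma dx_minus f g x t :
  ex_derive (fun y => f y t) x -> ex_derive (fun y => g y t) x ->
  dx (fun x t => f x t - g x t) x t = dx f x t - dx g x t.
Proof. exact (Derive_minus (fun y => f y t) (fun y => g y t) x). Qed.

Lemma cont2_plus f g : cont2 f -> cont2 g -> cont2 (fun x t => f x t + g x t).
Proof. intros Hf Hg p. exact (continuous_plus _ _ p (Hf p) (Hg p)). Qed.

Lemma cont2_mult f g : cont2 f -> cont2 g -> cont2 (fun x t => f x t * g x t).
Proof. intros Hf Hg p. exact (continuous_mult _ _ p (Hf p) (Hg p)). Qed.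

Lemma cont2_const c : cont2 (fun _ _ => c).
Proof. intros p. apply continuous_const. Qed.

Lemma cont2_x : cont2 (fun x _ => x).
Proof. intros p. apply continuous_fst. Qed.

Lemma cont2_t : cont2 (fun _ t => t).
Proof. intros p. apply continuous_snd. Qed.

Lemma cont2_continuous_in_x f x t : cont2 f -> continuous (fun y => f y t) x.
Proof.
  intros Hf.
  apply (continuous_comp_2 (fun y : R => y) (fun _ : R => t) f x);
    [apply continuous_id | apply continuous_const | apply Hf].
Qed.

Lemma cont2_continuous_in_t f x t : cont2 f -> continuous (fun s => f x s) t.
Proof.
  intros Hf.
  apply (continuous_comp_2 (fun _ : R => x) (fun s : R => s) f t);
    [apply continuous_const | apply continuous_id | apply Hf].
Qed.

Lemma Cn_weaken n f : Cn (S n) f -> Cn n f.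
Proof.
  revert f; induction n as [|n IH]; intros f Hf.
  - exact (proj1 Hf).
  - destruct Hf as (Hc & Hx & Ht & Hdx & Hdt).
    repeat split; auto.
Qed.

Lemma Cn_plus n : forall f g, Cn n f -> Cn n g -> Cn n (fun x t => f x t + g x t).
Proof.
  induction n as [|n IH]; intros f g Hf Hg; [now apply cont2_plus|].
  destruct Hf as (Fc & Fx & Ft & Fdx & Fdt), Hg as (Gc & Gx & Gt & Gdx & Gdt).
  repeat split.
  - now apply cont2_plus.
  - intros x t. now apply (ex_derive_plus (fun y => f y t) (fun y => g y t)).
  - intros x t. now apply (ex_derive_plus (fun s => f x s) (fun s => g x s)).
  - replace (dx _) with (fun x t => dx f x t + dx g x t); [now apply IH|].
    extensionality x; extensionality t. symmetry. now apply dx_plus.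
  - replace (dt _) with (fun x t => dt f x t + dt g x t); [now apply IH|].
    extensionality x; extensionality t. symmetry. now apply dt_plus.
Qed.

Lemma Cn_mult n : forall f g, Cn n f -> Cn n g -> Cn n (fun x t => f x t * g x t).
Proof.
  induction n as [|n IH]; intros f g Hf Hg; [now apply cont2_mult|].
  pose proof (Cn_weaken _ _ Hf) as Hf'; pose proof (Cn_weaken _ _ Hg) as Hg'.
  destruct Hf as (Fc & Fx & Ft & Fdx & Fdt), Hg as (Gc & Gx & Gt & Gdx & Gdt).
  repeat split.
  - now apply cont2_mult.
  - intros x t. now apply ex_derive_mult.
  - intros x t. now apply ex_derive_mult.
  - replace (dx _) with (fun x t => dx f x t * g x t + f x t * dx g x t);
      [apply Cn_plus; now apply IH|].
    extensionality x; extensionality t. symmetry. now apply dx_mult.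
  - replace (dt _) with (fun x t => dt f x t * g x t + f x t * dt g x t);
      [apply Cn_plus; now apply IH|].
    extensionality x; extensionality t. symmetry. now apply dt_mult.
Qed.

Lemma Cn_const n : forall c, Cn n (fun _ _ => c).
Proof.
  induction n as [|n IH]; intros c; [apply cont2_const|].
  cbn [Cn].
  replace (dx (fun _ _ => c)) with (fun _ _ : R => 0)
    by (extensionality x; extensionality t; symmetry; unfold dx, dt; apply Derive_const).
  replace (dt (fun _ _ => c)) with (fun _ _ : R => 0)
    by (extensionality x; extensionality t; symmetry; unfold dx, dt; apply Derive_const).
  repeat split; auto using cont2_const, ex_derive_const.
Qed.

Lemma Cn_x n : Cn n (fun x _ => x).
Proof.
  destruct n as [|n]; [apply cont2_x|].
  cbn [Cn].
  replace (dx (fun x _ => x)) with (fun _ _ : R => 1)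
    by (extensionality x; extensionality t; symmetry; unfold dx, dt; apply Derive_id).
  replace (dt (fun x _ => x)) with (fun _ _ : R => 0)
    by (extensionality x; extensionality t; symmetry; unfold dx, dt; apply Derive_const).
  repeat split; auto using cont2_x, Cn_const, ex_derive_id, ex_derive_const.
Qed.

Lemma Cn_t n : Cn n (fun _ t => t).
Proof.
  destruct n as [|n]; [apply cont2_t|].
  cbn [Cn].
  replace (dx (fun _ t => t)) with (fun _ _ : R => 0)
    by (extensionality x; extensionality t; symmetry; unfold dx, dt; apply Derive_const).
  replace (dt (fun _ t => t)) with (fun _ _ : R => 1)
    by (extensionality x; extensionality t; symmetry; unfold dx, dt; apply Derive_id).
  repeat split; auto using cont2_t, Cn_const, ex_derive_id, ex_derive_const.
Qed.

Lemma smooth_plus f g : smooth f -> smooth g -> smooth (fun x t => f x t + g x t).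
Proof. intros Hf Hg n. now apply Cn_plus. Qed.

Lemma smooth_mult f g : smooth f -> smooth g -> smooth (fun x t => f x t * g x t).
Proof. intros Hf Hg n. now apply Cn_mult. Qed.

Lemma smooth_const c : smooth (fun _ _ => c).
Proof. intros n. apply Cn_const. Qed.

Lemma smooth_x : smooth (fun x _ => x).
Proof. intros n. apply Cn_x. Qed.

Lemma smooth_t : smooth (fun _ t => t).
Proof. intros n. apply Cn_t. Qed.

Lemma smooth_minus f g : smooth f -> smooth g -> smooth (fun x t => f x t - g x t).
Proof.
  intros Hf Hg.
  replace (fun x t => f x t - g x t) with (fun x t => f x t + (fun _ _ => -1) x t * g x t)
    by (extensionality x; extensionality t; ring).
  auto using smooth_plus, smooth_mult, smooth_const.
Qed.

Lemma smooth_pow f k : smooth f -> smooth (fun x t => f x t ^ k).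
Proof.
  intros Hf. induction k as [|k IH]; [exact (smooth_const 1)|].
  exact (smooth_mult _ _ Hf IH).
Qed.

Lemma smooth_dx f : smooth f -> smooth (dx f).
Proof. intros Hf n. exact (proj1 (proj2 (proj2 (proj2 (Hf (S n)))))). Qed.

Lemma smooth_dt f : smooth f -> smooth (dt f).
Proof. intros Hf n. exact (proj2 (proj2 (proj2 (proj2 (Hf (S n)))))). Qed.

Lemma smooth_cont2 f : smooth f -> cont2 f.
Proof. intros Hf. exact (Hf O). Qed.

Lemma smooth_ex_derive_x f x t : smooth f -> ex_derive (fun y => f y t) x.
Proof. intros Hf. exact (proj1 (proj2 (Hf 1%nat)) x t). Qed.

Lemma smooth_ex_derive_t f x t : smooth f -> ex_derive (fun s => f x s) t.
Proof. intros Hf. exact (proj1 (proj2 (proj2 (Hf 1%nat))) x t). Qed.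

Lemma smooth_delta_u u w : smooth u -> smooth w -> smooth (delta_u u w).
Proof.
  intros Hu Hw. unfold delta_u.
  auto using smooth_plus, smooth_minus, smooth_mult, smooth_dx, smooth_dt.
Qed.

Lemma mom_even r u : (2 <= r)%nat -> Nat.Even r ->
  mom r u = fun x t => dx u x t ^ (r - 2) * dx u x t.
Proof.
  intros Hr [k Hk].
  extensionality x; extensionality t. unfold mom. f_equal.
  replace (r - 2)%nat with (2 * (k - 1))%nat by lia.
  rewrite RPow_abs, pow_mult. apply Rabs_right, Rle_ge, pow_le, pow2_ge_0.
Qed.

Lemma smooth_mom r u : (2 <= r)%nat -> Nat.Even r -> smooth u -> smooth (mom r u).
Proof.
  intros Hr He Hu. rewrite (mom_even r u Hr He).
  auto using smooth_mult, smooth_pow, smooth_dx.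
Qed.

Lemma ex_RInt_cont2 h a b t : cont2 h -> ex_RInt (fun x => h x t) a b.
Proof.
  intros Hh. apply (ex_RInt_continuous (V := R_CompleteNormedModule)).
  intros x _. now apply cont2_continuous_in_x.
Qed.

Lemma is_derive_RInt_smooth h a b s : smooth h ->
  is_derive (fun s => RInt (fun x => h x s) a b) s (RInt (fun x => dt h x s) a b).
Proof.
  intros Hh.
  apply (is_derive_RInt_param (fun s x => h x s) a b s).
  - apply filter_forall. intros s' x _. now apply smooth_ex_derive_t.
  - intros x _. apply continuity_2d_pt_filterlim.
    apply (continuous_comp_2 (fun z : R * R => snd z) (fun z : R * R => fst z) (dt h) (s, x));
      [apply continuous_snd | apply continuous_fst | apply smooth_cont2, smooth_dt, Hh].
  - apply filter_forall. intros s'. now apply ex_RInt_cont2, smooth_cont2.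
Qed.

Lemma continuous_RInt_smooth h a b s : smooth h ->
  continuous (fun s => RInt (fun x => h x s) a b) s.
Proof.
  intros Hh. apply (ex_derive_continuous (K := R_AbsRing) (V := R_NormedModule)).
  eexists. now apply is_derive_RInt_smooth.
Qed.

Lemma ex_RInt_RInt_smooth h a b t0 t1 : smooth h ->
  ex_RInt (fun t => RInt (fun x => h x t) a b) t0 t1.
Proof.
  intros Hh. apply (ex_RInt_continuous (V := R_CompleteNormedModule)).
  intros t _. now apply continuous_RInt_smooth.
Qed.

Lemma RInt_dx h a b t : smooth h -> RInt (fun x => dx h x t) a b = h b t - h a t.
Proof.
  intros Hh. apply (RInt_Derive (fun y => h y t)).
  - intros x _. now apply smooth_ex_derive_x.
  - intros x _. now apply (cont2_continuous_in_x (dx h)), smooth_cont2, smooth_dx.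
Qed.

(* Differentiation under the integral sign replaces Fubini here. *)
Lemma RInt_RInt_dt h a b t0 t1 : smooth h ->
  RInt (fun t => RInt (fun x => dt h x t) a b) t0 t1
  = RInt (fun x => h x t1) a b - RInt (fun x => h x t0) a b.
Proof.
  intros Hh. apply is_RInt_unique, (is_RInt_derive (fun s => RInt (fun x => h x s) a b)).
  - intros t _. now apply is_derive_RInt_smooth.
  - intros t _. now apply continuous_RInt_smooth, smooth_dt.
Qed.

Lemma RInt_eq_0 (f : R -> R) a b : a <= b ->
  (forall x, a <= x <= b -> f x = 0) -> RInt f a b = 0.
Proof.
  intros Hab Hf. rewrite (RInt_ext f (fun _ => 0)).
  - rewrite RInt_const. apply Rmult_0_r.
  - intros x Hx. rewrite Rmin_left, Rmax_right in Hx by lra. apply Hf; lra.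
Qed.

Lemma Derive_eq_0_on_interval (f : R -> R) lo hi s :
  (forall s, lo <= s <= hi -> f s = 0) -> lo < s < hi -> Derive f s = 0.
Proof.
  intros Hf Hs. rewrite (Derive_ext_loc f (fun _ => 0)); [apply Derive_const|].
  apply (locally_interval _ s lo hi); try (simpl; lra).
  intros y Hlo Hhi. simpl in *. apply Hf; lra.
Qed.

Lemma continuous_eq_0_closure (g : R -> R) a b c : a < b -> a <= c <= b ->
  continuous g c -> (forall x, a < x < b -> g x = 0) -> g c = 0.
Proof.
  intros Hab Hc Hg Hz.
  destruct (Rlt_or_le c b) as [Hcb | Hbc].
  - apply (filterlim_locally_unique (F := at_right c) g).
    + apply (filterlim_filter_le_1 (F := locally c)); [apply filter_le_within | exact Hg].
    + apply (filterlim_ext_loc (fun _ => 0)); [|apply filterlim_const].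
      apply (locally_interval _ c m_infty b); try (simpl; lra).
      intros y _ Hy Hcy. symmetry. apply Hz. simpl in Hy. lra.
  - apply (filterlim_locally_unique (F := at_left c) g).
    + apply (filterlim_filter_le_1 (F := locally c)); [apply filter_le_within | exact Hg].
    + apply (filterlim_ext_loc (fun _ => 0)); [|apply filterlim_const].
      apply (locally_interval _ c a p_infty); try (simpl; lra).
      intros y Hy _ Hcy. symmetry. apply Hz. simpl in Hy. lra.
Qed.

Lemma ex_RInt_continuous_sub (f : R -> R) a b l h :
  (forall x, a <= x <= b -> continuous f x) -> a <= l -> l <= h -> h <= b -> ex_RInt f l h.
Proof.
  intros Hf Hal Hlh Hhb. apply (ex_RInt_continuous (V := R_CompleteNormedModule)).
  intros x Hx. rewrite Rmin_left, Rmax_right in Hx by lra. apply Hf; lra.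
Qed.

Lemma RInt_gt_0_of_pos_point (f : R -> R) a b c : a < c < b ->
  (forall x, a <= x <= b -> continuous f x) ->
  (forall x, a < x < b -> 0 <= f x) -> 0 < f c -> 0 < RInt f a b.
Proof.
  intros Hc Hf Hnn Hfc.
  assert (Hloc : locally c (fun x => a < x < b /\ 0 < f x)).
  { apply filter_and.
    - apply (locally_interval _ c a b); try (simpl; lra). now intros y.
    - apply (Hf c ltac:(lra) (fun y => 0 < y)).
      apply (locally_interval _ (f c) 0 p_infty); try (simpl; lra). now intros y. }
  destruct Hloc as [d Hball].
  change (forall y, Rabs (y - c) < d -> a < y < b /\ 0 < f y) in Hball.
  pose proof (cond_pos d) as Hd0.
  assert (Hnear : forall y, c - d / 2 <= y <= c + d / 2 -> a < y < b /\ 0 < f y)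
    by (intros y Hy; apply Hball, Rabs_def1; lra).
  assert (Hl := proj1 (proj1 (Hnear (c - d / 2) ltac:(lra)))).
  assert (Hh := proj2 (proj1 (Hnear (c + d / 2) ltac:(lra)))).
  assert (Hsub : forall l h, a <= l -> l <= h -> h <= b -> ex_RInt f l h)
    by (intros; now apply (ex_RInt_continuous_sub f a b)).
  rewrite <- (RInt_Chasles f a (c - d / 2) b), <- (RInt_Chasles f (c - d / 2) (c + d / 2) b)
    by (apply Hsub; lra).
  assert (0 <= RInt f a (c - d / 2))
    by (apply RInt_ge_0; [lra | apply Hsub; lra | intros; apply Hnn; lra]).
  assert (0 <= RInt f (c + d / 2) b)
    by (apply RInt_ge_0; [lra | apply Hsub; lra | intros; apply Hnn; lra]).
  assert (0 < RInt f (c - d / 2) (c + d / 2))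
    by (apply RInt_gt_0; [lra | intros; apply Hnear; lra | intros; apply Hf; lra]).
  change plus with Rplus. lra.
Qed.

Lemma cont2_eq_0_closure f a b T : a < b -> 0 < T -> cont2 f ->
  (forall x t, a < x < b -> 0 < t < T -> f x t = 0) ->
  forall x t, a <= x <= b -> 0 <= t <= T -> f x t = 0.
Proof.
  intros Hab HT Hf Hz x t Hx Ht.
  apply (continuous_eq_0_closure (fun s => f x s) 0 T t); auto using cont2_continuous_in_t.
  intros s Hs.
  apply (continuous_eq_0_closure (fun y => f y s) a b x); auto using cont2_continuous_in_x.
Qed.

Lemma RInt_RInt_gt_0_of_pos_point g a b T x0 t0 : a < x0 < b -> 0 < t0 < T ->
  smooth g -> (forall x t, a < x < b -> 0 < t < T -> 0 <= g x t) -> 0 < g x0 t0 ->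
  0 < RInt (fun t => RInt (fun x => g x t) a b) 0 T.
Proof.
  intros Hx0 Ht0 Hg Hnn Hpos.
  apply (RInt_gt_0_of_pos_point _ 0 T t0 Ht0).
  - intros t _. now apply continuous_RInt_smooth.
  - intros t Ht. apply RInt_ge_0; [lra | now apply ex_RInt_cont2, smooth_cont2 |].
    intros x Hx. now apply Hnn.
  - apply (RInt_gt_0_of_pos_point _ a b x0 Hx0); [| intros x Hx; now apply Hnn | exact Hpos].
    intros x _. now apply cont2_continuous_in_x, smooth_cont2.
Qed.

Definition bump (a b T : R) : R -> R -> R :=
  fun x t => (x - a) * (b - x) * (t * (T - t)).

Lemma bump_pos a b T x t : a < x < b -> 0 < t < T -> 0 < bump a b T x t.
Proof.
  intros Hx Ht. unfold bump.
  apply Rmult_lt_0_compat; apply Rmult_lt_0_compat; lra.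
Qed.

Lemma admissible_mult_bump f a b T : smooth f ->
  admissible a b T (fun x t => f x t * bump a b T x t).
Proof.
  intros Hf. unfold bump. repeat split; try (intros; ring).
  auto using smooth_mult, smooth_minus, smooth_x, smooth_t, smooth_const.
Qed.

Lemma fundamental_lemma f a b T : a < b -> 0 < T -> smooth f ->
  (forall w, admissible a b T w ->
     RInt (fun t => RInt (fun x => f x t * w x t) a b) 0 T = 0) ->
  forall x t, a <= x <= b -> 0 <= t <= T -> f x t = 0.
Proof.
  intros Hab HT Hf Horth.
  apply cont2_eq_0_closure; auto using smooth_cont2.
  intros x0 t0 Hx0 Ht0.
  destruct (Req_dec (f x0 t0) 0) as [Hz | Hnz]; [exact Hz | exfalso].
  set (w := fun x t => f x t * bump a b T x t).
  assert (Hint : 0 < RInt (fun t => RInt (fun x => f x t * w x t) a b) 0 T).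
  { apply (RInt_RInt_gt_0_of_pos_point _ a b T x0 t0 Hx0 Ht0).
    - apply smooth_mult; [exact Hf | apply admissible_mult_bump, Hf].
    - intros x t Hx Ht. unfold w.
      pose proof (bump_pos a b T x t Hx Ht). nra.
    - unfold w. pose proof (bump_pos a b T x0 t0 Hx0 Ht0).
      assert (0 < f x0 t0 * f x0 t0) by (destruct (Rdichotomy _ _ Hnz); nra). nra. }
  rewrite (Horth w (admissible_mult_bump f a b T Hf)) in Hint. lra.
Qed.

(* [mu_t + u mu_x + 2 u_x mu] with [mu = m_x]: the Euler-Poincare operator of
   Diff([a,b]) applied to the momentum density [m_x]. *)
Definition ep_operator (m u : R -> R -> R) : R -> R -> R :=
  fun x t => dt (dx m) x t + dx m x t * dx u x t + dx (fun y s => dx m y s * u y s) x t.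

Definition flux_x (m u w : R -> R -> R) : R -> R -> R :=
  fun x t => m x t * delta_u u w x t - dx m x t * u x t * w x t.

Definition flux_t (m w : R -> R -> R) : R -> R -> R :=
  fun x t => dx m x t * w x t.

Lemma ep_operator_by_parts m u w x t : smooth m -> smooth u -> smooth w ->
  m x t * dx (delta_u u w) x t
  = ep_operator m u x t * w x t + dx (flux_x m u w) x t - dt (flux_t m w) x t.
Proof.
  intros Hm Hu Hw.
  assert (Hdu : smooth (delta_u u w)) by (apply smooth_delta_u; assumption).
  assert (Hflux : dx (flux_x m u w) x t
    = dx m x t * delta_u u w x t + m x t * dx (delta_u u w) x t
      - (dx (fun y s => dx m y s * u y s) x t * w x t + dx m x t * u x t * dx w x t)).
  { unfold flux_x.
    rewrite (dx_minus (fun y s => m y s * delta_u u w y s)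
                      (fun y s => dx m y s * u y s * w y s)),
            (dx_mult m (delta_u u w)), (dx_mult (fun y s => dx m y s * u y s) w).
    - reflexivity.
    - exact (smooth_ex_derive_x _ x t (smooth_mult _ _ (smooth_dx m Hm) Hu)).
    - exact (smooth_ex_derive_x w x t Hw).
    - exact (smooth_ex_derive_x m x t Hm).
    - exact (smooth_ex_derive_x _ x t Hdu).
    - exact (smooth_ex_derive_x _ x t (smooth_mult _ _ Hm Hdu)).
    - exact (smooth_ex_derive_x _ x t
               (smooth_mult _ _ (smooth_mult _ _ (smooth_dx m Hm) Hu) Hw)). }
  rewrite Hflux. unfold flux_t.
  rewrite dt_mult by (apply smooth_ex_derive_t; auto using smooth_dx).
  unfold ep_operator, delta_u. ring.
Qed.

Lemma flux_x_eq_0_at_boundary m u w c T t : 0 < t < T ->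
  (forall s, 0 <= s <= T -> w c s = 0) -> u c t = 0 -> flux_x m u w c t = 0.
Proof.
  intros Ht Hw Hu. unfold flux_x, delta_u, dt.
  rewrite (Derive_eq_0_on_interval (fun s => w c s) 0 T t Hw Ht), (Hw t), Hu by lra.
  ring.
Qed.

Lemma smooth_ep_operator m u : smooth m -> smooth u -> smooth (ep_operator m u).
Proof.
  intros Hm Hu. pose proof (smooth_dx m Hm) as Hmx.
  apply smooth_plus; [apply smooth_plus|].
  - exact (smooth_dt _ Hmx).
  - exact (smooth_mult _ _ Hmx (smooth_dx u Hu)).
  - exact (smooth_dx _ (smooth_mult _ _ Hmx Hu)).
Qed.

Lemma smooth_flux_x m u w : smooth m -> smooth u -> smooth w -> smooth (flux_x m u w).
Proof.
  intros Hm Hu Hw. apply smooth_minus.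
  - exact (smooth_mult _ _ Hm (smooth_delta_u u w Hu Hw)).
  - exact (smooth_mult _ _ (smooth_mult _ _ (smooth_dx m Hm) Hu) Hw).
Qed.

Lemma smooth_flux_t m w : smooth m -> smooth w -> smooth (flux_t m w).
Proof. intros Hm Hw. exact (smooth_mult _ _ (smooth_dx m Hm) Hw). Qed.

Lemma RInt_by_parts_in_x m u w a b T t : 0 < t < T ->
  smooth m -> smooth u -> smooth w ->
  (forall s, 0 <= s <= T -> w a s = 0 /\ w b s = 0) -> u a t = 0 -> u b t = 0 ->
  RInt (fun x => m x t * dx (delta_u u w) x t) a b
  = RInt (fun x => ep_operator m u x t * w x t) a b - RInt (fun x => dt (flux_t m w) x t) a b.
Proof.
  intros Ht Hm Hu Hw Hw_x Hua Hub.
  pose proof (smooth_mult _ _ (smooth_ep_operator m u Hm Hu) Hw) as Hepw.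
  pose proof (smooth_flux_x m u w Hm Hu Hw) as Hfx.
  pose proof (smooth_dt _ (smooth_flux_t m w Hm Hw)) as Hft.
  rewrite (RInt_ext _ (fun x => ep_operator m u x t * w x t + dx (flux_x m u w) x t
                                - dt (flux_t m w) x t))
    by (intros x _; now apply ep_operator_by_parts).
  rewrite (RInt_minus (V := R_CompleteNormedModule)).
  2: exact (ex_RInt_cont2 _ a b t (smooth_cont2 _ (smooth_plus _ _ Hepw (smooth_dx _ Hfx)))).
  2: exact (ex_RInt_cont2 _ a b t (smooth_cont2 _ Hft)).
  rewrite (RInt_plus (V := R_CompleteNormedModule)).
  2: exact (ex_RInt_cont2 _ a b t (smooth_cont2 _ Hepw)).
  2: exact (ex_RInt_cont2 _ a b t (smooth_cont2 _ (smooth_dx _ Hfx))).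
  rewrite (RInt_dx _ a b t Hfx).
  rewrite (flux_x_eq_0_at_boundary m u w a T t), (flux_x_eq_0_at_boundary m u w b T t);
    try assumption; try (intros s Hs; apply (Hw_x s Hs)).
  unfold minus, plus, opp; simpl. ring.
Qed.

Theorem first_variation_by_parts m u w a b T : a <= b -> 0 <= T ->
  smooth m -> smooth u -> admissible a b T w ->
  (forall t, 0 <= t <= T -> u a t = 0 /\ u b t = 0) ->
  RInt (fun t => RInt (fun x => m x t * dx (delta_u u w) x t) a b) 0 T
  = RInt (fun t => RInt (fun x => ep_operator m u x t * w x t) a b) 0 T.
Proof.
  intros Hab HT Hm Hu [Hw [Hw_t Hw_x]] Hu_x.
  pose proof (smooth_flux_t m w Hm Hw) as Hft.
  rewrite (RInt_ext _ (fun t => RInt (fun x => ep_operator m u x t * w x t) a b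
                                - RInt (fun x => dt (flux_t m w) x t) a b)).
  2: { intros t Ht. rewrite Rmin_left, Rmax_right in Ht by lra.
       apply (RInt_by_parts_in_x m u w a b T t); try assumption; apply Hu_x; lra. }
  rewrite (RInt_minus (V := R_CompleteNormedModule)).
  2: exact (ex_RInt_RInt_smooth _ a b 0 T
              (smooth_mult _ _ (smooth_ep_operator m u Hm Hu) Hw)).
  2: exact (ex_RInt_RInt_smooth _ a b 0 T (smooth_dt _ Hft)).
  rewrite (RInt_RInt_dt _ a b 0 T Hft).
  assert (Hend : forall s, (forall x, a <= x <= b -> w x s = 0) ->
                 RInt (fun x => flux_t m w x s) a b = 0).
  { intros s Hs. apply RInt_eq_0; [exact Hab|].
    intros x Hx. unfold flux_t. rewrite (Hs x Hx). ring. }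
  rewrite (Hend T), (Hend 0) by (intros x Hx; apply (Hw_t x Hx)).
  unfold minus, plus, opp; simpl. ring.
Qed.

Theorem mainTheorem2 (r : nat) (a b T : R) (u : R -> R -> R) :
  (2 <= r)%nat -> Nat.Even r -> a < b -> 0 < T ->
  smooth u ->
  (forall t, 0 <= t <= T -> u a t = 0 /\ u b t = 0) ->
  (forall w, admissible a b T w ->
     deltaS r a b T u w =
     RInt (fun t => RInt (fun x => rHS r u x t * w x t) a b) 0 T)
  /\
  ((forall w, admissible a b T w -> deltaS r a b T u w = 0) <->
   (forall x t, a <= x <= b -> 0 <= t <= T -> rHS r u x t = 0)).
Proof.
  intros Hr He Hab HT Hu Hu_x.
  pose proof (smooth_mom r u Hr He Hu) as Hm.
  assert (Hvar : forall w, admissible a b T w ->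
    deltaS r a b T u w = RInt (fun t => RInt (fun x => rHS r u x t * w x t) a b) 0 T).
  { intros w Hw. apply first_variation_by_parts; try assumption; lra. }
  split; [exact Hvar | split].
  - intros Hstat. apply fundamental_lemma; try assumption.
    + exact (smooth_ep_operator _ u Hm Hu).
    + intros w Hw. rewrite <- (Hvar w Hw). now apply Hstat.
  - intros Hhs w Hw. rewrite (Hvar w Hw).
    apply RInt_eq_0; [lra | intros t Ht].
    apply RInt_eq_0; [lra | intros x Hx].
    rewrite (Hhs x t Hx Ht). ring.
Qed.
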